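(* Let $n,k \in \mathbb{N}$ with $n \geq k$, and let $c_{n,k}$ be the smallest positive integer such that $c_{n,k} P^{(k)} \in E_n$ for every $P \in E_n$. Then $$c_{n,k} = \mathrm{lcm}\{d_{m,k} : k \leq m \leq n\}.$$ In particular, $c_{n,k}$ divides $q_{n,k}$.
   Context: For $n \in \mathbb{N}$, $E_n$ denotes the set of polynomials $P \in \mathbb{C}[X]$ of degree $\leq n$ (including the zero polynomial) such that $P(\mathbb{Z}) \subset \mathbb{Z}$. $P^{(k)}$ is the $k$-th derivative of $P$. For $n,k \in \mathbb{N}$ with $n \geq k$, define $$F_{n,k} = \sum_{\substack{i_1,\dots,i_k \in \mathbb{N}^* \\ i_1+\dots+i_k = n}} \frac{1}{i_1 i_2 \cdots i_k},$$ with the conventions $F_{0,0}=1$ and $F_{n,0}=0$ for $n \geq 1$; and $d_{n,k}$ is the denominator of the rational number $F_{n,k}$, i.e. the smallest positive integer $d$ with $dF_{n,k} \in \mathbb{Z}$. For $n,k \in \mathbb{N}$ with $n \geq k$, define $$q_{n,k} = \mathrm{lcm}\{i_1 i_2 \cdots i_k : i_1,\dots,i_k \in \mathbb{N}^*,\ i_1+\dots+i_k \leq n\},$$ with the convention $q_{n,0} = 1$. Here $\mathbb{N}^*$ denotes the positive integers. *)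

(* Complex numbers are modelled by algC (algebraic complex numbers). *)
From HB Require Import structures.
From mathcomp Require Import all_boot all_order all_algebra all_field.
Set Implicit Arguments. Unset Strict Implicit. Unset Printing Implicit Defensive.
Import Order.TTheory GRing.Theory Num.Theory.
Local Open Scope ring_scope.

Definition inE (n : nat) (P : {poly algC}) : Prop :=
  (size P <= n.+1)%N /\ forall z : int, P.[z%:~R] \in Num.int.

Definition posTuple (n k : nat) (t : {ffun 'I_k -> 'I_n.+1}) : bool :=
  [forall i, (0 < t i)%N].
Definition tsum (n k : nat) (t : {ffun 'I_k -> 'I_n.+1}) : nat :=
  (\sum_(i < k) (t i : nat))%N.
Definition tprod (n k : nat) (t : {ffun 'I_k -> 'I_n.+1}) : nat :=
  (\prod_(i < k) (t i : nat))%N.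

(* F_{n,k} = sum over i_1+...+i_k = n (i_j >= 1) of 1/(i_1...i_k);
   for k = 0 the only tuple is empty, giving F_{0,0}=1 and F_{n,0}=0 (n>=1). *)
Definition F (n k : nat) : rat :=
  \sum_(t : {ffun 'I_k -> 'I_n.+1} | posTuple t && (tsum t == n)) ((tprod t)%:R)^-1.

Definition d (n k : nat) : nat := `|denq (F n k)|%N.

Definition q (n k : nat) : nat :=
  (\big[lcmn/1]_(t : {ffun 'I_k -> 'I_n.+1} | posTuple t && (tsum t <= n)) tprod t)%N.

Definition admissible (n k c : nat) : Prop :=
  forall P : {poly algC}, inE n P -> inE n (c%:R *: P^`(k)).

From Pilot Require Import Defs.
From HB Require Import structures.
From mathcomp Require Import all_boot all_order all_algebra all_field.
From mathcomp Require Import ring.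
Set Implicit Arguments. Unset Strict Implicit. Unset Printing Implicit Defensive.
Import Order.TTheory GRing.Theory Num.Theory.
Local Open Scope ring_scope.

(* On polynomials of degree at most n, the derivative D and the forward difference
   Δ p(x) = p(x + 1) - p(x) are related by D = log(1 + Δ) = Σ_{1 <= i <= n} (-1)^(i+1) Δ^i / i;
   it suffices to check this on the binomial polynomials binom(X, j), on which Δ acts as a
   shift. Expanding the k-th power of this truncated logarithm gives
   D^k = Σ_{m <= n} (-1)^(m+k) F_{m,k} Δ^m. Since Δ preserves integer-valuedness,
   c D^k maps E_n into itself as soon as c F_{m,k} is an integer for k <= m <= n.
   Conversely, c D^k binom(X, m) evaluated at 0 is ±c F_{m,k}, which forces d_{m,k} | c.
   Finally every term 1/(i_1...i_k) of F_{m,k} has a denominator dividing q_{n,k}. *)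

Lemma size_derivn_leq (R : nzRingType) (p : {poly R}) k : (size p^`(k) <= size p)%N.
Proof.
elim: k => // k IH; rewrite derivnS (leq_trans _ IH) //.
by have [->|p_k] := eqVneq p^`(k) 0; [rewrite deriv0 | exact/ltnW/lt_size_deriv].
Qed.

Lemma dvdn_denq_Qint (c : nat) (x : rat) : (`|denq x| %| c)%N = (c%:R * x \is a Num.int).
Proof.
apply/idP/idP => [/dvdnP[a ->]|/intrP[z cxE]].
  rewrite natrM -mulrA [_%:R * x](_ : _ = (numq x)%:~R); last by rewrite numqE mulrC -absz_denq.
  by rewrite rpredM ?rpred_nat ?rpred_int.
have cnum : (c%:Z * numq x = z * denq x)%R.
  by apply: (@intr_inj rat); rewrite !intrM numqE mulrA -cxE.
rewrite -(@Gauss_dvdr _ `|numq x|) 1?coprime_sym ?coprime_num_den // mulnC.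
have -> : (c * `|numq x|)%N = `|(c%:Z * numq x)%R|%N by rewrite abszM.
by rewrite cnum abszM dvdn_mull.
Qed.

Lemma dvdn_biglcm_natP a b (G : nat -> nat) c :
  reflect (forall m, (a <= m < b)%N -> (G m %| c)%N) (\big[lcmn/1]_(a <= m < b) G m %| c)%N.
Proof.
apply: (iffP idP) => [L_c m m_ab | G_c].
  by apply: dvdn_trans L_c; rewrite (bigD1_seq m) ?mem_index_iota ?iota_uniq ?dvdn_lcml.
rewrite big_seq; elim/big_ind: _ => // [x y x_c y_c|m]; first by rewrite dvdn_lcm x_c.
by rewrite mem_index_iota => /G_c.
Qed.

Section FiniteDifference.

Variable R : idomainType.
Implicit Types (p Q : {poly R}) (i : nat).

Definition fdiff p : {poly R} := p \Po ('X + 1%:P) - p.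

Fact fdiff_is_linear : linear fdiff.
Proof. by move=> a p q; rewrite /fdiff linearP /= scalerBr addrACA opprD. Qed.
HB.instance Definition _ :=
  GRing.isSemilinear.Build R {poly R} {poly R} _ fdiff (GRing.semilinear_linear fdiff_is_linear).

Definition fdiffn i p : {poly R} := iter i fdiff p.

Fact fdiffn_is_linear i : linear (fdiffn i).
Proof. by elim: i => [//|i IH] a p q; rewrite /fdiffn !iterS -!/(fdiffn i _) IH linearP. Qed.
HB.instance Definition _ i :=
  GRing.isSemilinear.Build R {poly R} {poly R} _ (fdiffn i)
    (GRing.semilinear_linear (fdiffn_is_linear i)).

Lemma fdiffnS i p : fdiffn i.+1 p = fdiff (fdiffn i p).
Proof. by []. Qed.

Lemma fdiffnSr i p : fdiffn i.+1 p = fdiffn i (fdiff p).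
Proof. exact: iterSr. Qed.

Lemma horner_fdiff p x : (fdiff p).[x] = p.[x + 1] - p.[x].
Proof. by rewrite /fdiff hornerD hornerN horner_comp !hornerE. Qed.

Lemma deriv_fdiff p : (fdiff p)^`() = fdiff p^`().
Proof. by rewrite /fdiff derivB deriv_comp derivD derivX derivC addr0 mulr1. Qed.

Lemma size_fdiff p : (size (fdiff p) <= (size p).-1)%N.
Proof.
have [->|p_neq0] := eqVneq p 0; first by rewrite linear0 size_poly0.
have size_shift : size (p \Po ('X + 1%:P)) = size p by rewrite size_comp_poly2 ?size_XaddC.
have lead_shift : lead_coef (p \Po ('X + 1%:P)) = lead_coef p.
  by rewrite lead_coef_comp ?size_XaddC // lead_coefXaddC expr1n mulr1.
apply/leq_sizeP => j; rewrite leq_eqVlt => /orP[/eqP <-|]; rewrite coefB.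
  by move: lead_shift; rewrite /lead_coef size_shift => ->; rewrite subrr.
by rewrite -ltnS prednK ?size_poly_gt0 // => p_j; rewrite !nth_default ?size_shift ?subrr.
Qed.

Lemma size_fdiffn i p : (size (fdiffn i p) <= size p - i)%N.
Proof.
elim: i => [|i IH]; first by rewrite subn0.
by rewrite fdiffnS (leq_trans (size_fdiff _)) // subnS -!subn1 leq_sub2r.
Qed.

Lemma fdiffn_eq0 i p : (size p <= i)%N -> fdiffn i p = 0.
Proof.
by move=> p_i; apply/eqP; rewrite -size_poly_leq0 (leq_trans (size_fdiffn i p)) // leqn0 subn_eq0.
Qed.

(* [fdop Q p] is Q(Δ) p, the polynomial Q evaluated at the operator [fdiff]. *)
Definition fdop Q p : {poly R} := \sum_(i < size Q) Q`_i *: fdiffn i p.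

Fact fdop_is_linear Q : linear (fdop Q).
Proof.
move=> a p q; rewrite /fdop scaler_sumr -big_split; apply: eq_bigr => i _ /=.
by rewrite linearP scalerDr !scalerA mulrC.
Qed.
HB.instance Definition _ Q :=
  GRing.isSemilinear.Build R {poly R} {poly R} _ (fdop Q)
    (GRing.semilinear_linear (fdop_is_linear Q)).

Lemma fdop_widen N Q p : (size Q <= N)%N -> fdop Q p = \sum_(i < N) Q`_i *: fdiffn i p.
Proof.
move=> Q_N; rewrite /fdop (big_ord_widen N (fun i => Q`_i *: fdiffn i p) Q_N) big_mkcond.
by apply: eq_bigr => i _; case: ltnP => // /(nth_default 0) ->; rewrite scale0r.
Qed.

Lemma fdop_trunc N Q p : (size p <= N)%N -> fdop Q p = \sum_(i < N) Q`_i *: fdiffn i p.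
Proof.
move=> p_N; rewrite (@fdop_widen (maxn (size Q) N)) ?leq_maxl //.
rewrite [RHS](big_ord_widen (maxn (size Q) N) (fun i => Q`_i *: fdiffn i p)) ?leq_maxr //.
rewrite [RHS]big_mkcond; apply: eq_bigr => i _; case: ltnP => // N_i.
by rewrite fdiffn_eq0 ?scaler0 // (leq_trans p_N).
Qed.

Lemma fdopDl Q1 Q2 p : fdop (Q1 + Q2) p = fdop Q1 p + fdop Q2 p.
Proof.
pose N := maxn (size Q1) (size Q2).
rewrite (@fdop_widen N) ?(leq_trans (size_polyD _ _)) //.
rewrite (@fdop_widen N Q1) ?leq_maxl // (@fdop_widen N Q2) ?leq_maxr // -big_split.
by apply: eq_bigr => i _; rewrite coefD scalerDl.
Qed.

Lemma fdopZl a Q p : fdop (a *: Q) p = a *: fdop Q p.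
Proof.
rewrite (@fdop_widen (size Q)) ?size_scale_leq // /fdop scaler_sumr.
by apply: eq_bigr => i _; rewrite coefZ scalerA.
Qed.

Lemma fdop0l p : fdop 0 p = 0.
Proof. by rewrite /fdop size_poly0 big_ord0. Qed.

Lemma fdopCl a p : fdop a%:P p = a *: p.
Proof. by rewrite (@fdop_widen 1) ?size_polyC_leq1 // big_ord1 coefC. Qed.

Lemma fdiff_fdop Q p : fdiff (fdop Q p) = fdop Q (fdiff p).
Proof.
by rewrite /fdop linear_sum; apply: eq_bigr => i _; rewrite linearZ /= -fdiffnS fdiffnSr.
Qed.

Lemma fdopMXl Q p : fdop (Q * 'X) p = fdop Q (fdiff p).
Proof.
rewrite (@fdop_widen (size Q).+1) ?(leq_trans (size_polyMleq _ _)) ?size_polyX ?addn2 //.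
rewrite big_ord_recl coefMX /= scale0r add0r.
by apply: eq_bigr => i _; rewrite coefMX /= -fdiffnS fdiffnSr.
Qed.

Lemma fdopMl Q1 Q2 p : fdop (Q1 * Q2) p = fdop Q1 (fdop Q2 p).
Proof.
elim/poly_ind: Q1 p => [|Q a IH] p; first by rewrite mul0r !fdop0l.
rewrite mulrDl mulrAC fdopDl fdopMXl IH -fdiff_fdop -fdopMXl mul_polyC fdopZl.
by rewrite fdopDl fdopCl.
Qed.

End FiniteDifference.

Section BinomialPolynomials.

Variable R : numFieldType.
Implicit Types (p : {poly R}) (i j m : nat).

Definition binom_poly j : {poly R} := (j`!%:R)^-1 *: \prod_(0 <= i < j) ('X - i%:R%:P).

Lemma natr_fact_neq0 j : j`!%:R != 0 :> R.
Proof. by rewrite pnatr_eq0 -lt0n fact_gt0. Qed.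

Lemma size_binom_poly j : size (binom_poly j) = j.+1.
Proof. by rewrite size_scale ?invr_eq0 ?natr_fact_neq0 // size_prod_XsubC size_iota subn0. Qed.

Lemma fdiff_binom_poly0 : fdiff (binom_poly 0) = 0.
Proof. by rewrite /binom_poly big_nil /fdiff comp_polyZ comp_polyC subrr. Qed.

Lemma fdiff_binom_polyS j : fdiff (binom_poly j.+1) = binom_poly j.
Proof.
pose P := \prod_(0 <= i < j) ('X - i%:R%:P : {poly R}).
have shiftP : \prod_(0 <= i < j) (('X - i.+1%:R%:P) \Po ('X + 1%:P)) = P.
  by apply: eq_bigr => i _; rewrite comp_polyB comp_polyX comp_polyC -natr1 polyCD; ring.
rewrite /binom_poly linearZ /= /fdiff rmorph_prod big_nat_recl // big_nat_recr //=.
rewrite shiftP comp_polyB comp_polyX comp_polyC subr0 -/P.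
have -> : ('X + 1%:P) * P - P * ('X - j%:R%:P) = j.+1%:R *: P.
  by rewrite -mul_polyC -natr1 polyCD; ring.
by rewrite scalerA factS natrM invfM mulrAC mulVf ?mul1r // pnatr_eq0.
Qed.

Lemma binom_poly_at0 j : (binom_poly j).[0] = (j == 0)%N%:R.
Proof.
case: j => [|j]; first by rewrite /binom_poly big_nil hornerZ hornerC fact0 invr1 mulr1.
by rewrite /binom_poly hornerZ horner_prod big_nat_recl // !hornerE oppr0 /= mulr0 mul0r.
Qed.

Lemma fdiffn_binom_poly i m :
  fdiffn i (binom_poly m) = if (i <= m)%N then binom_poly (m - i) else 0.
Proof.
elim: i => [|i IH]; first by rewrite subn0.
rewrite fdiffnS IH; case: (ltngtP i m) => [i_m|m_i|->].
- by rewrite -(subnSK i_m) fdiff_binom_polyS.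
- by rewrite linear0.
- by rewrite subnn fdiff_binom_poly0.
Qed.

Lemma fdiffn_binom_poly_at0 i m : (fdiffn i (binom_poly m)).[0] = (i == m)%:R.
Proof.
rewrite fdiffn_binom_poly; case: leqP => [i_m|m_i]; last by rewrite horner0 gtn_eqF.
by rewrite binom_poly_at0 subn_eq0 eqn_leq i_m.
Qed.

Lemma deriv_binom_poly_at0 j : ((binom_poly j)^`()).[0] = (-1) ^+ j.+1 / j%:R.
Proof.
case: j => [|j].
  by rewrite /binom_poly big_nil derivZ derivC scaler0 horner0 invr0 mulr0.
have prod_at0 : \prod_(0 <= i < j) ('X - i.+1%:R%:P).[0] = (-1) ^+ j * j`!%:R :> R.
  elim: j => [|j IH]; first by rewrite big_geq ?mulr1.
  by rewrite big_nat_recr //= IH !hornerE factS natrM exprS; ring.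
rewrite /binom_poly derivZ hornerZ big_nat_recl // derivM !hornerE derivB derivX derivC.
rewrite subr0 hornerC oppr0 mul0r addr0 mul1r horner_prod prod_at0 factS natrM !exprS.
by field; rewrite natr_fact_neq0 addrC natr1 pnatr_eq0.
Qed.

Lemma fdiff_eq0_at0 p : fdiff p = 0 -> p.[0] = 0 -> p = 0.
Proof.
move=> fdiff_p p0.
have p_nat a : p.[a%:R] = 0.
  elim: a => // a IH; rewrite -natr1.
  by have := horner_fdiff p a%:R; rewrite fdiff_p horner0 IH subr0.
apply: (@roots_geq_poly_eq0 _ p [seq a%:R | a <- iota 0 (size p)]).
- by apply/allP => _ /mapP[a _ ->]; rewrite /root p_nat.
- by rewrite map_inj_uniq ?iota_uniq // => a b /eqP; rewrite eqr_nat => /eqP.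
- by rewrite size_map size_iota.
Qed.

Lemma fdop_binom_poly_at0 (Q : {poly R}) m : (fdop Q (binom_poly m)).[0] = Q`_m.
Proof.
rewrite (@fdop_trunc _ m.+1) ?size_binom_poly // horner_sum big_ord_recr /= big1 => [|i _].
  by rewrite add0r hornerZ fdiffn_binom_poly_at0 eqxx mulr1.
by rewrite hornerZ fdiffn_binom_poly_at0 ltn_eqF ?mulr0.
Qed.

End BinomialPolynomials.

Section Compositions.

Variables n k : nat.
Implicit Type t : {ffun 'I_k -> 'I_n.+1}.

Lemma tprod_eq0 t : ~~ posTuple t -> tprod t = 0%N.
Proof.
by case/forallPn => i; rewrite -eqn0Ngt => /eqP t_i; rewrite /tprod (bigD1 i) //= t_i.
Qed.

Lemma leq_tsum t i : (t i <= tsum t)%N.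
Proof. by rewrite /tsum (bigD1 i) //= leq_addr. Qed.

(* Tuples with a zero entry contribute [0^-1 = 0]. *)
Lemma F_widen m : (m <= n)%N ->
  F m k = \sum_(t : {ffun 'I_k -> 'I_n.+1} | tsum t == m) ((tprod t)%:R)^-1.
Proof.
move=> m_n; rewrite [RHS](bigID (@posTuple n k)) /= [X in _ + X]big1 ?addr0; last first.
  by move=> t /andP[_ /tprod_eq0 ->]; rewrite invr0.
have m_n1 : (m.+1 <= n.+1)%N by [].
pose widen (t : {ffun 'I_k -> 'I_m.+1}) : {ffun 'I_k -> 'I_n.+1} :=
  [ffun i => widen_ord m_n1 (t i)].
have widenE (t : {ffun 'I_k -> 'I_m.+1}) i : (widen t i : nat) = t i.
  by rewrite ffunE.
rewrite (reindex widen); last first.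
  exists (fun t : {ffun 'I_k -> 'I_n.+1} => [ffun i => inord (t i) : 'I_m.+1]).
    by move=> t _; apply/ffunP => i; apply: val_inj; rewrite !ffunE /= inordK.
  move=> t; rewrite inE => /andP[/eqP t_m _]; apply/ffunP => i; apply: val_inj.
  by rewrite !ffunE /= inordK // ltnS -t_m leq_tsum.
apply: eq_big => [t|t _]; last first.
  by congr (_%:R^-1); apply: eq_bigr => i _; rewrite widenE.
rewrite andbC; congr (_ && _); last by apply: eq_forallb => i; rewrite widenE.
by congr (_ == _); apply: eq_bigr => i _; rewrite widenE.
Qed.

Lemma F_small m : (m < k)%N -> F m k = 0.
Proof.
move=> m_k; rewrite /F big1 // => t /andP[/forallP t_pos /eqP t_m].
suff : (k <= m)%N by rewrite leqNgt m_k.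
by rewrite -t_m -[X in (X <= _)%N]card_ord -sum1_card /tsum leq_sum.
Qed.

Lemma dvdn_d_q m : (m <= n)%N -> (d m k %| q n k)%N.
Proof.
move=> m_n; rewrite /d dvdn_denq_Qint (F_widen m_n) mulr_sumr rpred_sum // => t /eqP t_m.
have [t_pos|/tprod_eq0 ->] := boolP (posTuple t); last by rewrite invr0 mulr0 rpred0.
apply/intr_nat/Qnat_dvd/(biglcmn_sup t) => //.
by rewrite t_pos t_m.
Qed.

End Compositions.

Section DerivativeAsLogarithm.

Variable R : numFieldType.
Implicit Types (p : {poly R}) (i j k m n : nat).

(* At [i = 0] this is [-1 / 0 = 0], the constant term of log(1 + X). *)
Definition log1p_coef i : R := (-1) ^+ i.+1 / i%:R.

Definition log1p_poly n : {poly R} := \poly_(i < n.+1) log1p_coef i.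

Lemma deriv_binom_poly n j : (j <= n)%N ->
  (binom_poly R j)^`() = fdop (log1p_poly n) (binom_poly R j).
Proof.
have at0 i : (i <= n)%N -> ((binom_poly R i)^`() - fdop (log1p_poly n) (binom_poly R i)).[0] = 0.
  move=> i_n; rewrite hornerD hornerN deriv_binom_poly_at0 fdop_binom_poly_at0 coef_poly.
  by rewrite ltnS i_n subrr.
elim: j => [|j IH] j_n; apply/subr0_eq/fdiff_eq0_at0; rewrite ?at0 //.
  by rewrite linearB /= -deriv_fdiff fdiff_fdop fdiff_binom_poly0 deriv0 linear0 subrr.
by rewrite linearB /= -deriv_fdiff fdiff_fdop fdiff_binom_polyS IH ?subrr // ltnW.
Qed.

Lemma binom_poly_reduce j p : (size p <= j.+1)%N ->
  exists a, (size (p - a *: binom_poly R j)%R <= j)%N.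
Proof.
move=> p_j; exists (p`_j / lead_coef (binom_poly R j)); apply/leq_sizeP => i.
rewrite leq_eqVlt coefB coefZ => /orP[/eqP <-|j_i].
  have -> : (binom_poly R j)`_j = lead_coef (binom_poly R j) by rewrite /lead_coef size_binom_poly.
  by rewrite divfK ?subrr // lead_coef_eq0 -size_poly_eq0 size_binom_poly.
rewrite [p`_i]nth_default ?(leq_trans p_j j_i) //.
by rewrite [(binom_poly R j)`_i]nth_default ?size_binom_poly // mulr0 subrr.
Qed.

Lemma deriv_fdop n p : (size p <= n.+1)%N -> p^`() = fdop (log1p_poly n) p.
Proof.
suff {p} : forall s p, (size p <= s <= n.+1)%N -> p^`() = fdop (log1p_poly n) p.
  by move=> IH p_n; apply: (IH (size p)); rewrite leqnn.
elim=> [|s IH] p /andP[p_s s_n].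
  by move: p_s; rewrite size_poly_leq0 => /eqP ->; rewrite deriv0 linear0.
have [a size_sub] := binom_poly_reduce p_s.
rewrite -(subrK (a *: binom_poly R s) p); move: (p - _) size_sub => r size_r.
rewrite derivD derivZ (@deriv_binom_poly n) // (IH r) ?size_r ?(ltnW s_n) //.
by rewrite linearD (linearZZ _ a (binom_poly R s)).
Qed.

Lemma derivn_fdop n k p : (size p <= n.+1)%N -> p^`(k) = fdop (log1p_poly n ^+ k) p.
Proof.
move=> p_n; elim: k => [|k IH]; first by rewrite expr0 -polyC1 fdopCl scale1r.
by rewrite derivnS (deriv_fdop (leq_trans (size_derivn_leq _ _) p_n)) IH exprS fdopMl.
Qed.

Lemma prod_log1p_coef k n (t : {ffun 'I_k -> 'I_n.+1}) :
  \prod_(i < k) log1p_coef (t i) = (-1) ^+ (tsum t + k) / (tprod t)%:R.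
Proof.
rewrite big_split /= prodrXr prodfV -natr_prod; congr (_ ^+ _ * _).
rewrite /tsum -[X in (_ + X)%N]card_ord -sum1_card -big_split /=.
by apply: eq_bigr => i _; rewrite addn1.
Qed.

Lemma coef_log1p_poly_exp n k m : (m <= n)%N ->
  (log1p_poly n ^+ k)`_m = (-1) ^+ (m + k) * ratr (F m k).
Proof.
move=> m_n; rewrite (F_widen k m_n) -[k in _ ^+ k]card_ord -prodr_const.
rewrite /log1p_poly poly_def bigA_distr_bigA /=.
rewrite coef_sum rmorph_sum mulr_sumr [RHS]big_mkcond /=; apply: eq_bigr => t _.
have -> : \prod_(i < k) (log1p_coef (t i) *: 'X^(t i)) =
          \prod_(i < k) log1p_coef (t i) *: 'X^(tsum t).
  rewrite -mul_polyC rmorph_prod /tsum -prodrXr -big_split /=.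
  by apply: eq_bigr => i _; rewrite mul_polyC.
rewrite coefZ coefXn prod_log1p_coef eq_sym; case: eqP => [->|_]; last by rewrite mulr0.
by rewrite mulr1 fmorphV /= ratr_nat.
Qed.

Lemma derivn_binom_poly_at0 m k :
  ((binom_poly R m)^`(k)).[0] = (-1) ^+ (m + k) * ratr (F m k).
Proof.
by rewrite (@derivn_fdop m) ?size_binom_poly // fdop_binom_poly_at0 coef_log1p_poly_exp.
Qed.

End DerivativeAsLogarithm.

Section IntegerValued.

Variable R : archiNumFieldType.
Implicit Types (p : {poly R}) (i j k m n c : nat).

Definition int_valued p := forall z : int, p.[z%:~R] \is a Num.int.

Lemma int_valued_fdiffn i p : int_valued p -> int_valued (fdiffn i p).
Proof.
move=> p_int; elim: i => // i IH z.
by rewrite fdiffnS horner_fdiff -[1]/(1%:~R) -intrD rpredB.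
Qed.

Lemma int_valued_from_fdiff p :
  int_valued (fdiff p) -> p.[0] \is a Num.int -> int_valued p.
Proof.
move=> fdiff_int p0_int.
have step (z : int) : p.[(z + 1)%:~R] = p.[z%:~R] + (fdiff p).[z%:~R].
  by rewrite horner_fdiff intrD [RHS]addrC subrK.
elim/int_rec=> [|a IH|a IH] //.
  by rewrite -addn1 PoszD step rpredD.
have := step (- a.+1%:Z); rewrite -addn1 PoszD opprD addrNK => p_a.
by rewrite -(rpredDr _ (fdiff_int (- a%:Z - 1))) -p_a.
Qed.

Lemma int_valued_binom_poly j : int_valued (binom_poly R j).
Proof.
elim: j => [|j IH]; apply: int_valued_from_fdiff; rewrite ?binom_poly_at0 ?rpred_nat //.
  by rewrite fdiff_binom_poly0 => z; rewrite horner0 rpred0.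
by rewrite fdiff_binom_polyS.
Qed.

Lemma ratr_int_num (x : rat) : (ratr x \is a @Num.int R) = (x \is a Num.int).
Proof. by rewrite !intrEfloor floor_rat -ratr_int (inj_eq (fmorph_inj _)). Qed.

Lemma dvdn_denq_ratr c (x : rat) : (`|denq x| %| c)%N = (c%:R * ratr x \is a @Num.int R).
Proof.
have -> : c%:R = ratr c%:R :> R by rewrite ratr_nat.
by rewrite -rmorphM ratr_int_num dvdn_denq_Qint.
Qed.

Lemma int_valued_scale_derivn n k c p : (forall m, (k <= m <= n)%N -> (d m k %| c)%N) ->
  (size p <= n.+1)%N -> int_valued p -> int_valued (c%:R *: p^`(k)).
Proof.
move=> d_c p_n p_int z; rewrite hornerZ (derivn_fdop k p_n) (fdop_trunc _ p_n).
rewrite horner_sum mulr_sumr rpred_sum // => i _.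
rewrite hornerZ mulrA rpredM ?int_valued_fdiffn // (@coef_log1p_poly_exp _ n k i (ltn_ord i)).
rewrite mulrCA rpredMsign -dvdn_denq_ratr.
have [k_i|/F_small ->] := leqP k i; last by rewrite dvdn_denq_Qint mulr0.
by apply: d_c; rewrite k_i -ltnS ltn_ord.
Qed.

Lemma dvdn_d_int_valued m k c : int_valued (c%:R *: (binom_poly R m)^`(k)) -> (d m k %| c)%N.
Proof.
by move=> /(_ 0); rewrite hornerZ derivn_binom_poly_at0 mulrCA rpredMsign -dvdn_denq_ratr.
Qed.

End IntegerValued.

Theorem theorem2 (n k : nat) (hkn : (k <= n)%N) :
  let L := (\big[lcmn/1]_(k <= m < n.+1) d m k)%N in
  [/\ (0 < L)%N, admissible n k L,
      (forall c : nat, (0 < c)%N -> admissible n k c -> (L <= c)%N)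
    & (L %| q n k)%N].
Proof.
move=> L; have d_L : forall m, (k <= m < n.+1)%N -> (d m k %| L)%N.
  exact/dvdn_biglcm_natP/dvdnn.
split.
- rewrite /L; elim/big_ind: _ => // [x y x_gt0 y_gt0|m _]; first by rewrite lcmn_gt0 x_gt0.
  by rewrite absz_gt0 denq_neq0.
- move=> P [P_n P_int]; split.
    by rewrite (leq_trans (size_scale_leq _ _)) // (leq_trans (size_derivn_leq _ _)).
  by apply: int_valued_scale_derivn P_n P_int => m; apply: d_L.
- move=> c c_gt0 c_adm; apply: dvdn_leq c_gt0 _; apply/dvdn_biglcm_natP => m /andP[_ m_n].
  have B_En : Defs.inE n (binom_poly algC m).
    by split; [rewrite size_binom_poly | exact: int_valued_binom_poly].
  by apply: (@dvdn_d_int_valued algC); case: (c_adm _ B_En).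
- by apply/dvdn_biglcm_natP => m /andP[_ m_n]; apply: dvdn_d_q.
Qed.
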